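(* Let $M$ be a spherical simply laced diagram and $\mathcal B$ an admissible $W$-orbit of sets of mutually orthogonal positive roots. Then there is a partial order $<$ on $\mathcal B$ with the following properties, for all $B\in\mathcal B$ and nodes $i,j$: (i) $B$ and $r_iB$ are comparable; furthermore, if $(\alpha_i,\beta)=\pm1$ for some $\beta\in B$, then $r_iB\ne B$; (ii) if $i\sim j$ and $\alpha_i\in B^\perp$, then $r_jB<B$ implies $r_ir_jB<r_jB$, and $r_jB>B$ implies $r_ir_jB>r_jB$; (iii) if $i\not\sim j$, $r_iB<B$, $r_jB<B$ and $r_iB\ne r_jB$, then $r_ir_jB<r_jB$ and $r_ir_jB<r_iB$; (iv) if $i\sim j$, $r_iB<B$ and $r_jB<B$, then either $r_ir_jB=r_jB$, or $r_ir_jB<r_jB$, $r_jr_iB<r_iB$, $r_ir_jr_iB<r_ir_jB$ and $r_ir_jr_iB<r_jr_iB$.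
   Context: $M$ has nodes $1,\dots,n$; for distinct nodes, $i\sim j$ means adjacent and $i\not\sim j$ means not adjacent. $W$ is the Weyl group of type $M$ with positive roots $\Phi^+$, fundamental roots $\alpha_i$, $r_i$ the reflection in $\alpha_i$, inner product with $(\alpha_i,\alpha_i)=2$, $(\alpha_i,\alpha_j)=-1$ if $i\sim j$ and $0$ otherwise. For a set $B$ of mutually orthogonal positive roots and $w\in W$, $wB=\Phi^+\cap\{\pm w\beta:\beta\in B\}$; $B^\perp$ is the set of roots orthogonal to all elements of $B$. A $W$-orbit $\mathcal B$ of such sets is admissible if for every $B\in\mathcal B$, all nodes $i,j$ with $i\not\sim j$ and every root $\gamma$ with $\gamma,\gamma-\alpha_i+\alpha_j\in B$, we have $r_iB=r_jB$. *)

From HB Require Import structures.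
From mathcomp Require Import all_boot all_order all_algebra.
From mathcomp Require Import boolp classical_sets.
Set Implicit Arguments. Unset Strict Implicit. Unset Printing Implicit Defensive.
Import Order.TTheory GRing.Theory Num.Theory.
Local Open Scope ring_scope.

(* A simply laced diagram M on nodes 'I_n is a symmetric irreflexive
   adjacency relation [adj] ("i ~ j" iff adj i j). Vectors of the root
   lattice are integer row vectors in the basis of fundamental roots. *)
Notation vec n := 'rV[int]_n.

Definition diagram n (adj : rel 'I_n) : Prop := irreflexive adj /\ symmetric adj.

Definition gram n (adj : rel 'I_n) : 'M[int]_n :=
  \matrix_(i, j) (if i == j then 2 else if adj i j then -1 else 0).

Definition rform n (adj : rel 'I_n) (x y : vec n) : int :=
  (x *m gram adj *m y^T) 0 0.

Definition alpha n (i : 'I_n) : vec n := delta_mx 0 i.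

Definition refl n (adj : rel 'I_n) (i : 'I_n) (x : vec n) : vec n :=
  x - rform adj x (alpha i) *: alpha i.

(* Elements of W are represented by words in the generators r_i;
   act [:: i1; ...; ik] x = r_i1 (... (r_ik x)). *)
Definition act n (adj : rel 'I_n) (w : seq 'I_n) (x : vec n) : vec n :=
  foldr (refl adj) x w.

(* M is spherical: W is finite, i.e. finitely many words represent
   all elements of W (as linear maps). *)
Definition spherical n (adj : rel 'I_n) : Prop :=
  exists ws : seq (seq 'I_n), forall w : seq 'I_n,
    exists2 w', w' \in ws & forall x, act adj w x = act adj w' x.

Inductive is_root n (adj : rel 'I_n) : vec n -> Prop :=
| root_base i : is_root adj (alpha i)
| root_refl i x : is_root adj x -> is_root adj (refl adj i x).

Definition is_pos_root n (adj : rel 'I_n) (x : vec n) : Prop :=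
  is_root adj x /\ forall j, 0 <= x 0 j.

Definition orth_pos_set n (adj : rel 'I_n) (B : set (vec n)) : Prop :=
  (forall b, B b -> is_pos_root adj b) /\
  (forall b c, B b -> B c -> b <> c -> rform adj b c = 0).

Definition wimg n (adj : rel 'I_n) (w : seq 'I_n) (B : set (vec n)) : set (vec n) :=
  fun x => is_pos_root adj x /\
           exists2 b, B b & (x = act adj w b \/ x = - act adj w b).

Definition W_orbit n (adj : rel 'I_n) (calB : set (set (vec n))) : Prop :=
  exists2 B0, orth_pos_set adj B0 &
    forall B, calB B <-> exists w, B = wimg adj w B0.

Definition admissible n (adj : rel 'I_n) (calB : set (set (vec n))) : Prop :=
  forall B, calB B -> forall i j : 'I_n, i != j -> ~~ adj i j ->
    forall g, is_root adj g -> B g -> B (g - alpha i + alpha j) ->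
      wimg adj [:: i] B = wimg adj [:: j] B.

Definition strict_porder_on T (S : set T) (lt : T -> T -> Prop) : Prop :=
  (forall x, S x -> ~ lt x x) /\
  (forall x y z, S x -> S y -> S z -> lt x y -> lt y z -> lt x z).

(* Two distinct positive roots b, c of a finite root system have (b, c) in
   {-1, 0, 1}: if (b, c) >= 2, alternately reflecting b and c in each other
   produces infinitely many roots.  Hence, for B in the orbit and alpha_i not
   in B, r_i acts on B elementwise and moves each b by -(b, alpha_i) alpha_i.
   Sets of roots are compared at the greatest height where they differ; then
   r_i B < B or B < r_i B according as the highest of b and r_i b, over the b
   in B moved by r_i, is attained by a root moved down or moved up.  Two such
   candidates never tie: a tie gives roots x, y of equal height with
   (x, y) = 1, while x - y is then a root.  Properties (ii)-(iv) follow by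
   excluding the ascending case, whose maximality conditions leave only such
   a tie or, in (iii), two elements of r_i B differing by alpha_i - alpha_j,
   where admissibility forces r_i B = r_j B. *)

From HB Require Import structures.
From mathcomp Require Import all_boot all_order all_algebra.
From mathcomp Require Import boolp classical_sets.
From mathcomp Require Import zify ring.
Set Implicit Arguments. Unset Strict Implicit. Unset Printing Implicit Defensive.
Import Order.TTheory GRing.Theory Num.Theory.
Local Open Scope ring_scope.
Local Open Scope classical_set_scope.

Lemma exists_argmax (T : choiceType) (d : Order.disp_t) (R : orderType d)
    (P : T -> Prop) (f : T -> R) (s : seq T) :
  (forall x, P x -> x \in s) -> (exists x, P x) ->
  exists2 x, P x & forall y, P y -> (f y <= f x)%O.
Proof.
move=> Ps [x0 Px0]; pose Q (y : seq_sub s) := `[< P (val y) >].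
have Q0 : Q (SeqSub (Ps x0 Px0)) by apply/asboolP.
case: (arg_maxP (fun y => f (val y)) Q0) => y /asboolP Py ymax.
by exists (val y) => // z Pz; apply: (ymax (SeqSub (Ps z Pz))); apply/asboolP.
Qed.

Section RootLattice.
Variables (n : nat) (adj : rel 'I_n).
Hypothesis adjD : diagram adj.

Local Notation rf := (rform adj).
Local Notation r := (refl adj).
Local Notation rfa i x := (rform adj x (alpha i)).

Lemma adj_sym : symmetric adj.
Proof. by case: adjD. Qed.

Lemma tr_gram : (gram adj)^T = gram adj.
Proof. by apply/matrixP => i j; rewrite !mxE eq_sym adj_sym. Qed.

Lemma rformC x y : rf x y = rf y x.
Proof.
rewrite /rform -[in LHS](trmxK (x *m _ *m y^T)) [in LHS]mxE.
by rewrite !trmx_mul trmxK tr_gram mulmxA.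
Qed.

Lemma rformDl x y z : rf (x + y) z = rf x z + rf y z.
Proof. by rewrite /rform !mulmxDl mxE. Qed.

Lemma rformZl k x z : rf (k *: x) z = k * rf x z.
Proof. by rewrite /rform -!scalemxAl mxE. Qed.

Lemma rformNl x z : rf (- x) z = - rf x z.
Proof. by rewrite -scaleN1r rformZl mulN1r. Qed.

Lemma rformBl x y z : rf (x - y) z = rf x z - rf y z.
Proof. by rewrite rformDl rformNl. Qed.

Lemma rformDr x y z : rf z (x + y) = rf z x + rf z y.
Proof. by rewrite /rform linearD /= mulmxDr mxE. Qed.

Lemma rformZr k x z : rf z (k *: x) = k * rf z x.
Proof. by rewrite /rform linearZ /= -scalemxAr mxE. Qed.

Lemma rformNr x z : rf z (- x) = - rf z x.
Proof. by rewrite -scaleN1r rformZr mulN1r. Qed.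

Lemma rformBr x y z : rf z (x - y) = rf z x - rf z y.
Proof. by rewrite rformDr rformNr. Qed.

Lemma rform0l z : rf 0 z = 0.
Proof. by rewrite /rform !mul0mx mxE. Qed.

Lemma alphaE (i k : 'I_n) : alpha i 0 k = (i == k)%:R.
Proof. by rewrite /alpha mxE eqxx eq_sym. Qed.

Lemma rform_alpha i j : rf (alpha i) (alpha j) = gram adj i j.
Proof.
rewrite /rform /alpha trmx_delta -colE !mxE (bigD1 i) //= big1 => [|k /negbTE hk].
  by rewrite !mxE !eqxx mul1r addr0.
by rewrite mxE hk andbF mul0r.
Qed.

Lemma rform_alpha_id i : rfa i (alpha i) = 2.
Proof. by rewrite rform_alpha mxE eqxx. Qed.

Lemma rform_alpha_adj i j : adj i j -> rf (alpha i) (alpha j) = -1.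
Proof.
move=> hij; rewrite rform_alpha mxE hij; case: eqP => // eij.
by case: adjD => irr _; move: hij; rewrite eij irr.
Qed.

Lemma rform_alpha_nadj i j : i != j -> ~~ adj i j -> rf (alpha i) (alpha j) = 0.
Proof. by move=> /negbTE h1 /negbTE h2; rewrite rform_alpha mxE h1 h2. Qed.

Definition nonneg (x : vec n) := forall k, 0 <= x 0 k.

Lemma nonneg_alpha i : nonneg (alpha i).
Proof. by move=> k; rewrite alphaE ler0n. Qed.

Lemma nonneg_alphaD i j : nonneg (alpha i + alpha j).
Proof. by move=> k; rewrite mxE addr_ge0 //; apply: nonneg_alpha. Qed.

Lemma rform_alpha_le0 i x : nonneg x -> x 0 i = 0 -> rfa i x <= 0.
Proof.
move=> x_ge0 xi0; rewrite /rform /alpha trmx_delta -colE !mxE.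
rewrite sumr_le0 // => k _; case: (eqVneq k i) => [-> | /negbTE hk].
  by rewrite xi0 mul0r.
by rewrite mxE hk; apply: mulr_ge0_le0 => //; case: adj.
Qed.

Definition height (x : vec n) : int := \sum_k x 0 k.

Lemma heightD x y : height (x + y) = height x + height y.
Proof. by rewrite /height -big_split; apply: eq_bigr => k _; rewrite mxE. Qed.

Lemma heightZ k x : height (k *: x) = k * height x.
Proof. by rewrite /height mulr_sumr; apply: eq_bigr => l _; rewrite mxE. Qed.

Lemma heightN x : height (- x) = - height x.
Proof. by rewrite -scaleN1r heightZ mulN1r. Qed.

Lemma height_alpha i : height (alpha i) = 1.
Proof.
rewrite /height (bigD1 i) //= big1 => [|k /negbTE hk]; first by rewrite alphaE eqxx addr0.
by rewrite alphaE eq_sym hk.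
Qed.

Lemma reflE i x : r i x = x - rfa i x *: alpha i.
Proof. by []. Qed.

Lemma reflD i x y : r i (x + y) = r i x + r i y.
Proof. by rewrite !reflE rformDl scalerDl opprD addrACA. Qed.

Lemma reflZ i k x : r i (k *: x) = k *: r i x.
Proof. by rewrite !reflE rformZl scalerBr scalerA. Qed.

Lemma reflN i x : r i (- x) = - r i x.
Proof. by rewrite -!scaleN1r reflZ. Qed.

Lemma height_refl i x : height (r i x) = height x - rfa i x.
Proof. by rewrite reflE heightD heightN heightZ height_alpha mulr1. Qed.

Lemma refl_alpha i : r i (alpha i) = - alpha i.
Proof. by rewrite reflE rform_alpha_id scaler_nat mulr2n opprD addNKr. Qed.

Lemma rform_refl_alpha_id i x : rfa i (r i x) = - rfa i x.
Proof. by rewrite reflE rformBl rformZl rform_alpha_id; ring. Qed.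

Lemma rform_refl_alpha_adj i j x : adj i j -> rfa j (r i x) = rfa j x + rfa i x.
Proof. by move=> hij; rewrite reflE rformBl rformZl rform_alpha_adj //; ring. Qed.

Lemma rform_refl_alpha_nadj i j x :
  i != j -> ~~ adj i j -> rfa j (r i x) = rfa j x.
Proof. by move=> h1 h2; rewrite reflE rformBl rformZl rform_alpha_nadj //; ring. Qed.

Lemma reflK i : involutive (r i).
Proof. by move=> x; rewrite [LHS]reflE rform_refl_alpha_id reflE scaleNr opprK subrK. Qed.

Lemma rform_refl i x y : rf (r i x) (r i y) = rf x y.
Proof.
rewrite !reflE rformBl !rformBr !rformZl !rformZr rform_alpha_id.
by rewrite (rformC (alpha i) y); ring.
Qed.

Lemma refl_id i x : rfa i x = 0 -> r i x = x.
Proof. by move=> h; rewrite reflE h scale0r subr0. Qed.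

Lemma rform_reflr i x y : rf x (r i y) = rf x y - rfa i y * rfa i x.
Proof. by rewrite reflE rformBr rformZr. Qed.

Lemma refl_alpha_adj i j : adj i j -> r j (alpha i) = alpha i + alpha j.
Proof. by move=> hij; rewrite reflE rform_alpha_adj // scaleN1r opprK. Qed.

Lemma refl_comm i j x : i != j -> ~~ adj i j -> r i (r j x) = r j (r i x).
Proof.
move=> nij aij; have aji : ~~ adj j i by rewrite adj_sym.
rewrite (reflE i (r j x)) (reflE j (r i x)).
rewrite rform_refl_alpha_nadj 1?eq_sym // rform_refl_alpha_nadj //.
by rewrite !reflE; apply/rowP => k; rewrite !mxE; ring.
Qed.

Lemma refl_braidE i j x : adj i j ->
  r i (r j (r i x)) = x - (rfa i x + rfa j x) *: (alpha i + alpha j).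
Proof.
move=> hij; have hji : adj j i by rewrite adj_sym.
rewrite (reflE i) rform_refl_alpha_adj // rform_refl_alpha_id rform_refl_alpha_adj //.
rewrite (reflE j (r i x)) rform_refl_alpha_adj // !reflE.
by apply/rowP => k; rewrite !mxE; ring.
Qed.

Lemma refl_braid i j x : adj i j -> r i (r j (r i x)) = r j (r i (r j x)).
Proof.
move=> hij; have hji : adj j i by rewrite adj_sym.
rewrite !refl_braidE //.
by rewrite (addrC (rfa i x)) (addrC (alpha i)).
Qed.

Local Notation act := (act adj).

Lemma actD w x y : act w (x + y) = act w x + act w y.
Proof. by elim: w => //= i w ->; rewrite reflD. Qed.

Lemma actZ w k x : act w (k *: x) = k *: act w x.
Proof. by elim: w => //= i w ->; rewrite reflZ. Qed.

Lemma actN w x : act w (- x) = - act w x.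
Proof. by rewrite -!scaleN1r actZ. Qed.

Lemma rform_act w x y : rf (act w x) (act w y) = rf x y.
Proof. by elim: w => //= i w <-; rewrite rform_refl. Qed.

Lemma act_cat w1 w2 x : act (w1 ++ w2) x = act w1 (act w2 x).
Proof. by rewrite /act foldr_cat. Qed.

Lemma act_revK w : cancel (act w) (act (rev w)).
Proof.
elim: w => //= i w IH x.
by rewrite rev_cons -cats1 act_cat /= reflK IH.
Qed.

Lemma act_revKV w : cancel (act (rev w)) (act w).
Proof. by rewrite -{2}(revK w); apply: act_revK. Qed.


Definition layer_lt (B C : set (vec n)) : Prop := exists h : int,
  [/\ forall y, h < height y -> (B y <-> C y),
      exists x, [/\ height x = h, C x & ~ B x] &
      forall x, height x = h -> B x -> C x].

Lemma layer_lt_irr B : ~ layer_lt B B.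
Proof. by case=> h [_ [x [_ Bx /(_ Bx)]]]. Qed.

Lemma layer_lt_trans A B C : layer_lt A B -> layer_lt B C -> layer_lt A C.
Proof.
move=> [h1 [AB [x1 [hx1 Bx1 Ax1]] AB1]] [h2 [BC [x2 [hx2 Cx2 Bx2]] BC2]].
case: (ltgtP h1 h2) => h12.
- exists h2; split.
  + by move=> y hy; rewrite (AB y (lt_trans h12 hy)) (BC y hy).
  + by exists x2; split=> //; rewrite (AB x2) ?hx2.
  + by move=> x hx Ax; apply: BC2 => //; rewrite -(AB x) ?hx.
- exists h1; split.
  + by move=> y hy; rewrite (AB y hy) (BC y (lt_trans h12 hy)).
  + by exists x1; split=> //; rewrite -(BC x1) ?hx1.
  + by move=> x hx Ax; rewrite -(BC x) ?hx //; apply: AB1.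
- rewrite -{}h12 in BC BC2 hx2; exists h1; split.
  + by move=> y hy; rewrite (AB y hy) (BC y hy).
  + by exists x2; split=> // /(AB1 _ hx2).
  + by move=> x hx /(AB1 _ hx) /(BC2 _ hx).
Qed.

Section FiniteRootSystem.
Hypothesis adjS : spherical adj.

Local Notation root := (is_root adj).

Lemma root_act w x : root x -> root (act w x).
Proof. by move=> rx; elim: w => //= i w IH; apply: root_refl. Qed.

Lemma root_word x : root x -> exists w j, x = act w (alpha j).
Proof.
elim=> [i | i y _ [w [j ->]]]; first by exists [::], i.
by exists (i :: w), j.
Qed.

Lemma rform_root_self x : root x -> rf x x = 2.
Proof. by elim=> [i | i y _ IH]; rewrite ?rform_alpha_id // rform_refl. Qed.

Lemma root_neq0 x : root x -> x != 0.
Proof. by move=> /rform_root_self; apply: contra_eqN => /eqP ->; rewrite rform0l. Qed.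

(* The reflection in an arbitrary root b is conjugate to some r_j. *)
Lemma root_reflect a b : root a -> root b -> root (a - rf a b *: b).
Proof.
move=> ra /root_word [w [j ->]].
have -> : a - rf a (act w (alpha j)) *: act w (alpha j) = act w (r j (act (rev w) a)).
  rewrite reflE actD actN actZ act_revKV.
  by rewrite -(rform_act w (act (rev w) a)) act_revKV.
by apply/root_act/root_refl/root_act.
Qed.

Lemma rootN b : root b -> root (- b).
Proof.
move=> rb; have := root_reflect rb rb; rewrite rform_root_self //.
by rewrite scaler_nat mulr2n opprD addNKr.
Qed.

Lemma roots_finite : exists L : seq (vec n), forall x, root x -> x \in L.
Proof.
case: adjS => ws hws; exists [seq act w (alpha j) | w <- ws, j <- enum 'I_n] => x.
case/root_word => w [j ->]; case: (hws w) => w' hw' ->.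
by apply: allpairs_f => //; rewrite mem_enum.
Qed.

Section Chebyshev.
Variables (a b : vec n) (m : int).
Hypotheses (ra : root a) (rb : root b) (rab : rf a b = m) (m_ge2 : 2 <= m).

(* u_k = q_k a - p_k b with u_0 = b, u_1 = a and u_(k+2) = m u_(k+1) - u_k,
   which is minus the reflection of u_k in u_(k+1).  For m >= 2 the
   coefficients grow strictly, so a <> b would give infinitely many roots. *)
Fixpoint cheb k : int * int :=
  if k is k'.+1 then let: (p, q) := cheb k' in (q, m * q - p) else (-1, 0).

Definition cheb_root k := (cheb k).2 *: a - (cheb k).1 *: b.

Lemma chebS k : cheb k.+1 = ((cheb k).2, m * (cheb k).2 - (cheb k).1).
Proof. by rewrite /=; case: cheb. Qed.

Lemma cheb_lt12 k : (cheb k).1 < (cheb k).2 /\ 0 <= (cheb k).2.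
Proof. by elim: k => [|k]; rewrite ?chebS /=; nia. Qed.

Lemma cheb_increasing k l :
  (k < l)%N -> (cheb k).1 < (cheb l).1 /\ (cheb k).2 < (cheb l).2.
Proof.
elim: l => // l IH; rewrite ltnS leq_eqVlt chebS /= => /orP [/eqP -> | /IH].
  by have := cheb_lt12 l; nia.
by have := cheb_lt12 l; nia.
Qed.

Lemma cheb_root_chain k :
  [/\ root (cheb_root k), root (cheb_root k.+1) & rf (cheb_root k) (cheb_root k.+1) = m].
Proof.
elim: k => [|k [r1 r2 e12]].
  have -> : cheb_root 0 = b by apply/rowP => j; rewrite !mxE /=; ring.
  have -> : cheb_root 1 = a by apply/rowP => j; rewrite !mxE /=; ring.
  by rewrite rformC.
have eS : cheb_root k.+2 =
    - (cheb_root k - rf (cheb_root k) (cheb_root k.+1) *: cheb_root k.+1).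
  by rewrite e12 /cheb_root !chebS /=; apply/rowP => j; rewrite !mxE; ring.
split=> //; first by rewrite eS; apply/rootN/root_reflect.
by rewrite eS rformNr rformBr rformZr e12 rform_root_self // rformC e12; ring.
Qed.

Lemma rform_cheb_root k c :
  rf (cheb_root k) c = (cheb k).2 * rf a c - (cheb k).1 * rf b c.
Proof. by rewrite rformBl !rformZl. Qed.

Lemma cheb_root_inj k l : (k < l)%N -> cheb_root k = cheb_root l -> a = b.
Proof.
move=> kl ekl; have [lt1 lt2] := cheb_increasing kl.
have := congr1 (rf^~ a) ekl; have := congr1 (rf^~ b) ekl.
rewrite !rform_cheb_root (rform_root_self ra) (rform_root_self rb) (rformC b a) rab => eb ea.
have d12 : (cheb l).1 - (cheb k).1 = (cheb l).2 - (cheb k).2 by nia.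
have : cheb_root l - cheb_root k = ((cheb l).2 - (cheb k).2) *: (a - b).
  have e1 : (cheb l).1 = (cheb l).2 - (cheb k).2 + (cheb k).1 by lia.
  by apply/rowP => j; rewrite !mxE e1; ring.
rewrite ekl subrr => /esym/eqP; rewrite scalemx_eq0 => /orP [/eqP | ]; first lia.
by rewrite subr_eq0 => /eqP.
Qed.

Lemma cheb_bound : a = b.
Proof.
apply/eqP/negPn/negP => /eqP ab; have [L hL] := roots_finite.
have u : uniq (map cheb_root (iota 0 (size L).+1)).
  rewrite map_inj_in_uniq ?iota_uniq // => k l _ _ e.
  case: (ltngtP k l) => // [kl | lk]; case: ab.
    exact: cheb_root_inj kl e.
  exact: cheb_root_inj lk (esym e).
have sub : {subset map cheb_root (iota 0 (size L).+1) <= L}.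
  by move=> x /mapP [k _ ->]; apply: hL; case: (cheb_root_chain k).
by have := uniq_leq_size u sub; rewrite size_map size_iota ltnn.
Qed.

End Chebyshev.

Lemma rform_root_ge2 a b : root a -> root b -> 2 <= rf a b -> a = b.
Proof. by move=> ra rb; apply: cheb_bound. Qed.

Lemma rform_root_leN2 a b : root a -> root b -> rf a b <= -2 -> a = - b.
Proof. by move=> ra rb hab; apply: rform_root_ge2 ra (rootN rb) _; rewrite rformNr; lia. Qed.

Lemma height_gt0 x : root x -> nonneg x -> 0 < height x.
Proof.
move=> rx x_ge0; rewrite lt_def sumr_ge0 // andbT.
apply: contraNN (root_neq0 rx) => /eqP /(psumr_eq0P (fun k _ => x_ge0 k)) x0.
by apply/eqP/rowP => k; rewrite mxE x0.
Qed.

Lemma nonneg_rootN x : root x -> nonneg x -> ~ nonneg (- x).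
Proof.
move=> rx x_ge0 /(height_gt0 (rootN rx)); rewrite heightN oppr_gt0.
by rewrite ltNge (ltW (height_gt0 rx x_ge0)).
Qed.

Lemma rform_nonneg_range (b c : vec n) :
  root b -> nonneg b -> root c -> nonneg c -> b <> c -> -1 <= rf b c <= 1.
Proof.
move=> rb b_ge0 rc c_ge0 bc; apply/andP; split; rewrite leNgt; apply/negP => h.
  by apply: (nonneg_rootN rc c_ge0); rewrite -(rform_root_leN2 rb rc) //; lia.
by apply: bc; apply: rform_root_ge2 => //; lia.
Qed.

Lemma nonneg_refl i x : root x -> nonneg x -> x <> alpha i -> nonneg (r i x).
Proof.
move=> rx x_ge0 xi k.
have := rform_nonneg_range rx x_ge0 (root_base _ i) (nonneg_alpha i) xi.
have := @rform_alpha_le0 i x x_ge0; have := x_ge0 k; have := x_ge0 i.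
rewrite reflE !mxE eqxx; case: (eqVneq i k) => [<- | _] /=; lia.
Qed.

Lemma root_nonneg_or_nonpos x : root x -> nonneg x \/ nonneg (- x).
Proof.
elim=> [i | i y ry [y_ge0 | y_le0]]; first by left; apply: nonneg_alpha.
- have [-> | yi] := eqVneq y (alpha i).
    by right; rewrite refl_alpha opprK; apply: nonneg_alpha.
  by left; apply: nonneg_refl => //; apply/eqP.
- have [yi | yi] := eqVneq (- y) (alpha i).
    by left; rewrite -[y]opprK yi reflN refl_alpha opprK; apply: nonneg_alpha.
  by right; rewrite -reflN; apply: nonneg_refl (rootN ry) y_le0 _; apply/eqP.
Qed.

(* If (x, y) = 1 then x - y is a root, which cannot have height 0. *)
Lemma height_neq x y : root x -> root y -> rf x y = 1 -> height x <> height y.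
Proof.
move=> rx ry xy1 hxy; have rxy : root (x - y) by have := root_reflect rx ry; rewrite xy1 scale1r.
have hxy0 : height (x - y) = 0 by rewrite heightD heightN hxy subrr.
case: (root_nonneg_or_nonpos rxy) => [/(height_gt0 rxy) | /(height_gt0 (rootN rxy))].
  by rewrite hxy0.
by rewrite heightN hxy0 oppr0.
Qed.

Lemma root_alphaD i j : adj i j -> root (alpha i + alpha j).
Proof.
by move=> hij; rewrite -refl_alpha_adj //; apply/root_refl/root_base.
Qed.

Definition absr (x : vec n) : vec n := if pselect (nonneg x) then x else - x.

Lemma absr_id x : nonneg x -> absr x = x.
Proof. by rewrite /absr; case: pselect. Qed.

Lemma absr_cases x : absr x = x \/ absr x = - x.
Proof. by rewrite /absr; case: pselect; [left | right]. Qed.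

Lemma absrN x : root x -> absr (- x) = absr x.
Proof.
move=> rx; rewrite /absr; case: pselect => [xN | xN]; case: pselect => [x_ge0 | x_lt0].
- by case: (nonneg_rootN rx x_ge0).
- by [].
- by rewrite opprK.
- by case: (root_nonneg_or_nonpos rx).
Qed.

Lemma absr_pos_root x : root x -> is_pos_root adj (absr x).
Proof.
move=> rx; rewrite /absr; case: pselect => [// | x_lt0]; split; first exact: rootN.
by case: (root_nonneg_or_nonpos rx).
Qed.

Lemma absr_refl_absr i x : root x -> absr (r i (absr x)) = absr (r i x).
Proof. by move=> rx; case: (absr_cases x) => ->; rewrite ?reflN ?absrN //; apply: root_refl. Qed.

Lemma sub_roots (B : set (vec n)) : B `<=` is_pos_root adj -> B `<=` root.
Proof. by move=> Bpos b /Bpos []. Qed.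

Lemma wimg_pos w B : wimg adj w B `<=` is_pos_root adj.
Proof. by move=> x []. Qed.

Lemma wimg_roots w B : wimg adj w B `<=` root.
Proof. exact/sub_roots/wimg_pos. Qed.

Local Hint Resolve wimg_pos wimg_roots : core.

Lemma wimgE w B x : B `<=` root ->
  wimg adj w B x <-> exists2 b, B b & x = absr (act w b).
Proof.
move=> Broot; split=> [[[rx x_ge0] [b Bb [xE | xE]]] | [b Bb ->]].
- by exists b => //; rewrite -xE absr_id.
- by exists b => //; rewrite -[act w b]opprK -xE absrN // absr_id.
- split; first by apply/absr_pos_root/root_act/Broot.
  by exists b => //; case: (absr_cases (act w b)) => ->; [left | right].
Qed.

Lemma eq_wimg w w' B : act w =1 act w' -> wimg adj w B = wimg adj w' B.
Proof. by move=> ww'; rewrite /wimg (funext ww'). Qed.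

Lemma wimg_nil B : B `<=` is_pos_root adj -> wimg adj [::] B = B.
Proof.
move=> Bpos; apply/predeqP => x; rewrite wimgE /=; last exact: sub_roots.
split.
  by case=> b Bb ->; rewrite absr_id //; case: (Bpos b Bb).
by move=> Bx; exists x; rewrite ?absr_id //; case: (Bpos x Bx).
Qed.

Lemma wimg_cons i w B : B `<=` root -> wimg adj [:: i] (wimg adj w B) = wimg adj (i :: w) B.
Proof.
move=> Broot; apply/predeqP => x.
rewrite wimgE; last by apply/sub_roots/wimg_pos.
rewrite wimgE //; split=> [[y /(wimgE _ _ Broot) [b Bb ->] ->] | [b Bb ->]].
  by exists b; rewrite //= absr_refl_absr //; apply/root_act/Broot.
exists (absr (act w b)); first by apply/(wimgE _ _ Broot); exists b.
by rewrite /= absr_refl_absr //; apply/root_act/Broot.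
Qed.

Local Notation rB i B := (wimg adj [:: i] B).

Lemma wimg2 i j B : B `<=` root -> wimg adj [:: i; j] B = rB i (rB j B).
Proof. by move=> Broot; rewrite wimg_cons. Qed.

Lemma wimg3 i j k B : B `<=` root -> wimg adj [:: i; j; k] B = rB i (rB j (rB k B)).
Proof. by move=> Broot; rewrite -(wimg_cons i [:: j; k]) // wimg2. Qed.

Lemma rBK i B : B `<=` is_pos_root adj -> rB i (rB i B) = B.
Proof.
move=> Bpos; rewrite -wimg2; last exact: sub_roots.
by rewrite -{2}(wimg_nil Bpos); apply: eq_wimg => x /=; rewrite reflK.
Qed.

Lemma rB_comm i j B : i != j -> ~~ adj i j -> B `<=` root -> rB i (rB j B) = rB j (rB i B).
Proof. by move=> nij aij Broot; rewrite -!wimg2 //; apply: eq_wimg => x; apply: refl_comm. Qed.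

Lemma rB_braid i j B : adj i j -> B `<=` root ->
  rB i (rB j (rB i B)) = rB j (rB i (rB j B)).
Proof. by move=> hij Broot; rewrite -!wimg3 //; apply: eq_wimg => x; apply: refl_braid. Qed.

Lemma rBE i B : B `<=` is_pos_root adj -> ~ B (alpha i) ->
  forall x, rB i B x <-> exists2 b, B b & x = r i b.
Proof.
move=> Bpos Bi x; rewrite wimgE /=; last exact: sub_roots.
suff rb_ge0 b : B b -> absr (r i b) = r i b.
  by split=> -[b Bb ->]; exists b; rewrite ?rb_ge0.
move=> Bb; have [rb b_ge0] := Bpos b Bb.
by rewrite absr_id //; apply: nonneg_refl => // bi; rewrite bi in Bb.
Qed.

Lemma rB_refl i B b : B `<=` is_pos_root adj -> ~ B (alpha i) -> B b -> rB i B (r i b).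
Proof. by move=> Bpos Bi Bb; apply/(rBE Bpos Bi); exists b. Qed.

Lemma rB_orth i B : B `<=` is_pos_root adj -> (forall b, B b -> rfa i b = 0) -> rB i B = B.
Proof.
move=> Bpos Bi0; have Bi : ~ B (alpha i) by move=> /Bi0; rewrite rform_alpha_id.
apply/predeqP => x; rewrite (rBE Bpos Bi); split=> [[b Bb ->] | Bx].
  by rewrite refl_id ?Bi0.
by exists x; rewrite ?refl_id ?Bi0.
Qed.

(* Among the b in B moved by r_i, the highest of b and r_i b is attained at
   some b1 moved down ([descent]) or at some r_i b2 with b2 moved up
   ([ascent]); r_i B and B first differ at that height. *)
Definition descent i (B : set (vec n)) := exists2 b1, B b1 &
  [/\ rfa i b1 = 1, forall b, B b -> rfa i b = 1 -> height b <= height b1 &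
      forall b, B b -> rfa i b = -1 -> height b + 1 < height b1].

Definition ascent i (B : set (vec n)) := exists2 b2, B b2 &
  [/\ rfa i b2 = -1, forall b, B b -> rfa i b = -1 -> height b <= height b2 &
      forall b, B b -> rfa i b = 1 -> height b <= height b2].

Section Orbit.
Variable calB : set (set (vec n)).
Hypothesis calBW : W_orbit adj calB.

Lemma calB_pos B : calB B -> B `<=` is_pos_root adj.
Proof. by case: calBW => B0 _ calBE /calBE [w ->]; apply: wimg_pos. Qed.

Lemma calB_rB i B : calB B -> calB (rB i B).
Proof.
case: calBW => B0 [B0pos _] calBE /calBE [w ->]; apply/calBE; exists (i :: w).
by rewrite wimg_cons //; apply: sub_roots.
Qed.

Lemma calB_orth B b c : calB B -> B b -> B c -> b <> c -> rf b c = 0.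
Proof.
case: calBW => B0 [B0pos B0orth] calBE /calBE [w ->].
have B0root : B0 `<=` root by apply: sub_roots.
move=> /(wimgE _ _ B0root) [b0 Bb0 ->] /(wimgE _ _ B0root) [c0 Bc0 ->] bc.
have b0c0 : b0 <> c0 by move=> e; apply: bc; rewrite e.
have := rform_act w b0 c0; rewrite (B0orth b0 c0) // => e0.
by case: (absr_cases (act w b0)) => ->; case: (absr_cases (act w c0)) => ->;
  rewrite ?rformNl ?rformNr e0 ?oppr0.
Qed.

Section Member.
Variable B : set (vec n).
Hypothesis BcalB : calB B.

Let Bpos : B `<=` is_pos_root adj := calB_pos BcalB.

Lemma rB_alpha i : B (alpha i) -> rB i B = B.
Proof.
move=> Bi; apply/predeqP => x; rewrite wimgE /=; last exact: sub_roots.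
have fixb b : B b -> absr (r i b) = b.
  move=> Bb; have [rb b_ge0] := Bpos Bb.
  have [-> | bi] := eqVneq b (alpha i).
    by rewrite refl_alpha absrN ?absr_id //; [apply: nonneg_alpha | apply: root_base].
  by rewrite refl_id ?absr_id // (calB_orth BcalB Bb Bi) //; apply/eqP.
split=> [[b Bb ->] | Bx]; first by rewrite fixb.
by exists x; rewrite ?fixb.
Qed.

Lemma rform_alpha_mem i b : ~ B (alpha i) -> B b -> -1 <= rfa i b <= 1.
Proof.
move=> Bi Bb; have [rb b_ge0] := Bpos Bb.
by apply: rform_nonneg_range (root_base _ i) (nonneg_alpha i) _ => // bi; rewrite bi in Bb.
Qed.

Lemma rform_alpha2_mem i j b : adj i j -> ~ B (alpha i) -> ~ B (alpha j) ->
  ~ B (alpha i + alpha j) -> B b ->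
  -1 <= rfa i b <= 1 /\ -1 <= rfa j b <= 1 /\ -1 <= rfa i b + rfa j b <= 1.
Proof.
move=> hij Bi Bj Bij Bb; have [rb b_ge0] := Bpos Bb.
do 2 (split; first exact: rform_alpha_mem); rewrite -rformDr.
apply: rform_nonneg_range (root_alphaD hij) (nonneg_alphaD i j) _ => // bij.
by rewrite bij in Bb.
Qed.

Lemma alpha_notin i b : B b -> rfa i b = 1 \/ rfa i b = -1 -> ~ B (alpha i).
Proof.
move=> Bb bi Bi; have [bE | bi'] := eqVneq b (alpha i).
  by move: bi; rewrite bE rform_alpha_id; lia.
by move: bi; rewrite (calB_orth BcalB Bb Bi) //; [lia | apply/eqP].
Qed.

Lemma rB_id_mem i b : ~ B (alpha i) -> B b -> rfa i b = 0 -> rB i B b.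
Proof. by move=> Bi Bb bi0; apply/(rBE Bpos Bi); exists b; rewrite ?refl_id. Qed.

(* (b, r_i b) = 2 - (b, alpha_i)^2 = 1, so b and r_i b are not orthogonal. *)
Lemma refl_notin i b : ~ B (alpha i) -> B b -> rfa i b != 0 -> ~ B (r i b).
Proof.
move=> Bi Bb /eqP bi0 Brb; have [rb _] := Bpos Bb.
have := rform_alpha_mem Bi Bb.
have brb : b <> r i b by move=> e; have := rform_refl_alpha_id i b; rewrite -e; lia.
have := calB_orth BcalB Bb Brb brb; rewrite rform_reflr rform_root_self //; nia.
Qed.

Lemma rB_notin i b : ~ B (alpha i) -> B b -> rfa i b != 0 -> ~ rB i B b.
Proof.
move=> Bi Bb bi0 /(rBE Bpos Bi) [b' Bb' bE].
apply: (refl_notin Bi Bb' _); last by rewrite -bE.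
by move: bi0; rewrite bE rform_refl_alpha_id oppr_eq0.
Qed.

Lemma height_down_up i b1 b2 : B b1 -> B b2 -> rfa i b1 = 1 -> rfa i b2 = -1 ->
  height b1 <> height b2 + 1.
Proof.
move=> Bb1 Bb2 b1i b2i; have [rb1 _] := Bpos Bb1; have [rb2 _] := Bpos Bb2.
have b12 : b1 <> b2 by move=> e; move: b1i; rewrite e b2i; lia.
have := height_neq rb1 (root_refl i rb2).
by rewrite rform_reflr (calB_orth BcalB Bb1 Bb2 b12) height_refl b1i b2i; lia.
Qed.

Lemma height_down_up2 i j d b : adj i j -> B d -> B b ->
  rfa j d = 1 -> rfa i d = 0 -> rfa i b = 0 -> rfa j b = -1 -> height d <> height b + 2.
Proof.
move=> hij Bd Bb dj di bi bj; have [rd _] := Bpos Bd; have [rb _] := Bpos Bb.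
have db : d <> b by move=> e; move: dj; rewrite e bj; lia.
have := height_neq rd (root_refl i (root_refl j rb)).
rewrite !rform_reflr (calB_orth BcalB Bd Bb db) !height_refl.
have hji : adj j i by rewrite adj_sym.
by rewrite rform_refl_alpha_adj // di bi bj dj; lia.
Qed.

Lemma rB_lt_of_heights i h : ~ B (alpha i) ->
  (forall b, B b -> rfa i b != 0 -> height b <= h /\ height (r i b) < h) ->
  (exists2 b, B b & rfa i b != 0 /\ height b = h) -> layer_lt (rB i B) B.
Proof.
move=> Bi low [b1 Bb1 [b1i hb1]]; exists h; split.
- move=> y hy; split=> [/(rBE Bpos Bi) [b Bb yE] | By].
    have [bi0 | bi0] := eqVneq (rfa i b) 0; first by rewrite yE refl_id.
    by have := low b Bb bi0; rewrite -yE; lia.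
  have [yi0 | yi0] := eqVneq (rfa i y) 0; first exact: rB_id_mem.
  by have := low y By yi0; lia.
- by exists b1; split=> //; apply: rB_notin.
- move=> x hx /(rBE Bpos Bi) [b Bb xE].
  have [bi0 | bi0] := eqVneq (rfa i b) 0; first by rewrite xE refl_id.
  by have := low b Bb bi0; rewrite -xE; lia.
Qed.

Lemma descent_notin i : descent i B -> ~ B (alpha i).
Proof. by case=> b Bb [bi _ _]; apply: alpha_notin Bb _; left. Qed.

Lemma ascent_notin i : ascent i B -> ~ B (alpha i).
Proof. by case=> b Bb [bi _ _]; apply: alpha_notin Bb _; right. Qed.

Lemma descent_lt i : descent i B -> layer_lt (rB i B) B.
Proof.
move=> desc_i; have Bi := descent_notin desc_i; case: desc_i => b1 Bb1 [b1i up down].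
apply: (rB_lt_of_heights (h := height b1)) => // [b Bb /eqP bi0 | ].
  have := up b Bb; have := down b Bb; have := rform_alpha_mem Bi Bb.
  by rewrite height_refl; split; lia.
by exists b1; rewrite ?b1i.
Qed.

Lemma descent_or_ascent i : rB i B <> B -> descent i B \/ ascent i B.
Proof.
move=> rBB; have Bi : ~ B (alpha i) by move/rB_alpha.
have moved : exists b, B b /\ rfa i b <> 0.
  apply: contrapT => none; apply/rBB/rB_orth => // b Bb.
  by apply: contrapT => bi0; apply: none; exists b.
have [L rootsL] := roots_finite.
pose top b := if rfa i b == 1 then height b else height b + 1.
have [b [Bb bi0] bmax] :=
  exists_argmax top (fun x (Px : B x /\ _) => rootsL x (Bpos Px.1).1) moved.
have cmp c : B c -> rfa i c <> 0 -> top c <= top b by move=> Bc ci0; apply: bmax.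
have [bi | bi] : rfa i b = 1 \/ rfa i b = -1 by have := rform_alpha_mem Bi Bb; lia.
- left; exists b => //; split=> // c Bc ci; have := cmp c Bc; rewrite /top ci bi /=.
    by lia.
  by have := height_down_up Bb Bc bi ci; lia.
- right; exists b => //; split=> // c Bc ci; have := cmp c Bc; rewrite /top ci bi /=.
    by lia.
  by have := height_down_up Bc Bb ci bi; lia.
Qed.

End Member.

Lemma ascent_gt i B : calB B -> ascent i B -> layer_lt B (rB i B).
Proof.
move=> BcalB asc_i; have Bi := ascent_notin BcalB asc_i; case: asc_i => b2 Bb2 [b2i down up].
have Bpos := calB_pos BcalB.
have rb2i : rfa i (r i b2) = 1 by rewrite rform_refl_alpha_id b2i.
have rBi := alpha_notin (calB_rB i BcalB) (rB_refl Bpos Bi Bb2) (or_introl rb2i).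
rewrite -{1}(rBK i Bpos); apply: (rB_lt_of_heights (calB_rB i BcalB) (h := height b2 + 1) rBi).
  move=> _ /(rBE Bpos Bi) [b Bb ->]; rewrite reflK height_refl rform_refl_alpha_id oppr_eq0.
  move=> /eqP bi0; have := down b Bb; have := up b Bb; have := rform_alpha_mem BcalB Bi Bb.
  by split; lia.
by exists (r i b2); [apply: rB_refl | rewrite rb2i height_refl b2i; split=> //; lia].
Qed.

Lemma lt_descent i B : calB B -> layer_lt (rB i B) B -> descent i B.
Proof.
move=> BcalB lti; have rBB : rB i B <> B by move=> e; move: lti; rewrite e; apply: layer_lt_irr.
case: (descent_or_ascent BcalB rBB) => // /(ascent_gt BcalB) gti.
by case: (layer_lt_irr (layer_lt_trans lti gti)).
Qed.

Lemma gt_ascent i B : calB B -> layer_lt B (rB i B) -> ascent i B.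
Proof.
move=> BcalB gti; have rBB : rB i B <> B by move=> e; move: gti; rewrite e; apply: layer_lt_irr.
case: (descent_or_ascent BcalB rBB) => // /(descent_lt BcalB) lti.
by case: (layer_lt_irr (layer_lt_trans lti gti)).
Qed.

Lemma lt_of_not_ascent i B : calB B -> rB i B <> B -> ~ ascent i B -> layer_lt (rB i B) B.
Proof. by move=> BcalB rBB nasc; case: (descent_or_ascent BcalB rBB) => // /(descent_lt BcalB). Qed.

Lemma rB_comparable i B : calB B -> rB i B = B \/ layer_lt B (rB i B) \/ layer_lt (rB i B) B.
Proof.
move=> BcalB; case: (pselect (rB i B = B)) => [-> | rBB]; [by left | right].
case: (descent_or_ascent BcalB rBB) => [/(descent_lt BcalB) | /(ascent_gt BcalB)];
  by [right | left].
Qed.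

Lemma rB_neq i B b : calB B -> B b ->
  rform adj (alpha i) b = 1 \/ rform adj (alpha i) b = -1 -> rB i B <> B.
Proof.
rewrite rformC => BcalB Bb bi rBB; have Bi := alpha_notin BcalB Bb bi.
by apply: (rB_notin BcalB Bi Bb); [apply/eqP; case: bi => ->; lia | rewrite rBB].
Qed.

Lemma notin_alpha_rB i j B : adj i j -> B `<=` is_pos_root adj -> ~ B (alpha j) ->
  ~ B (alpha i + alpha j) -> ~ rB j B (alpha i).
Proof.
move=> hij Bpos Bj Bij /(rBE Bpos Bj) [b Bb /(congr1 (r j))].
by rewrite reflK refl_alpha_adj // => bE; apply: Bij; rewrite bE.
Qed.

Section Orthogonal.
Variables (i j : 'I_n) (B : set (vec n)).
Hypotheses (BcalB : calB B) (hij : adj i j) (Bi0 : forall b, B b -> rfa i b = 0).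

Let Bpos : B `<=` is_pos_root adj := calB_pos BcalB.

Let rfai b : B b -> rfa i (r j b) = rfa j b.
Proof.
move=> Bb; have hji : adj j i by rewrite adj_sym.
by rewrite rform_refl_alpha_adj // Bi0 ?add0r.
Qed.

Lemma orth_lt_rB : layer_lt (rB j B) B -> layer_lt (rB i (rB j B)) (rB j B).
Proof.
move=> ltj; have desc_j := lt_descent BcalB ltj; have Bj := descent_notin BcalB desc_j.
case: desc_j => b1 Bb1 [b1j _ down1].
apply: lt_of_not_ascent; first exact: calB_rB.
  move=> fix_ij; have : rB j (rB i (rB j B)) = B by rewrite fix_ij rBK.
  rewrite -rB_braid //; last exact: sub_roots.
  rewrite (rB_orth Bpos Bi0) fix_ij => rjB.
  by move: ltj; rewrite rjB; apply: layer_lt_irr.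
move=> [_ /(rBE Bpos Bj) [b2 Bb2 ->] [b2i _ up2]]; rewrite rfai // in b2i.
have := up2 _ (rB_refl Bpos Bj Bb1); rewrite rfai // !height_refl b1j b2i.
have := down1 _ Bb2 b2i; have := height_down_up2 BcalB hij Bb1 Bb2 b1j (Bi0 Bb1) (Bi0 Bb2) b2i.
lia.
Qed.

Lemma orth_gt_rB : layer_lt B (rB j B) -> layer_lt (rB j B) (rB i (rB j B)).
Proof.
move=> /(gt_ascent BcalB) asc_j; have Bj := ascent_notin BcalB asc_j.
case: asc_j => b2 Bb2 [b2j down2 up2].
apply: ascent_gt; first exact: calB_rB.
exists (r j b2); first exact: rB_refl.
split; first by rewrite rfai.
  move=> _ /(rBE Bpos Bj) [b Bb ->]; rewrite rfai // !height_refl b2j => bj.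
  by have := down2 b Bb bj; rewrite bj; lia.
move=> _ /(rBE Bpos Bj) [b Bb ->]; rewrite rfai // !height_refl b2j => bj.
by have := up2 b Bb bj; rewrite bj; lia.
Qed.

End Orthogonal.

Section Adjacent.
Variables (i j : 'I_n) (B : set (vec n)).
Hypotheses (BcalB : calB B) (hij : adj i j) (Bij : ~ B (alpha i + alpha j)).

Let Bpos : B `<=` is_pos_root adj := calB_pos BcalB.
Let hji : adj j i. Proof. by rewrite adj_sym. Qed.

Let rfai b : rfa i (r j b) = rfa i b + rfa j b.
Proof. exact: rform_refl_alpha_adj. Qed.

Let rfaj b : rfa j (r i b) = rfa j b + rfa i b.
Proof. exact: rform_refl_alpha_adj. Qed.

Lemma descents_lt_rB2 : descent i B -> descent j B ->
  rB i (rB j B) <> rB j B -> layer_lt (rB i (rB j B)) (rB j B).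
Proof.
move=> desc_i desc_j hne.
have Bi := descent_notin BcalB desc_i; have Bj := descent_notin BcalB desc_j.
case: desc_i desc_j => b1 Bb1 [b1i _ down1] [d1 Bd1 [d1j _ downj]].
have range := rform_alpha2_mem BcalB hij Bi Bj Bij.
apply: lt_of_not_ascent hne _; first exact: calB_rB.
move=> [_ /(rBE Bpos Bj) [b2 Bb2 ->] [b2ij _ up2]].
have up2b1 := up2 _ (rB_refl Bpos Bj Bb1); have up2d1 := up2 _ (rB_refl Bpos Bj Bd1).
rewrite !rfai !height_refl in b2ij up2b1 up2d1.
have b1j : rfa j b1 = 0 \/ rfa j b1 = -1 by have := range _ Bb1; lia.
have d1i : rfa i d1 = 0 \/ rfa i d1 = -1 by have := range _ Bd1; lia.
have [[b2i b2j] | [b2i b2j]] : rfa i b2 = -1 /\ rfa j b2 = 0 \/ rfa i b2 = 0 /\ rfa j b2 = -1.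
  by have := range _ Bb2; lia.
- have := down1 _ Bb2 b2i; case: b1j => b1j.
    by move: up2b1; rewrite b1i b1j b2j; lia.
  have := downj _ Bb1 b1j; case: d1i => d1i.
    by move: up2d1; rewrite d1i d1j b2j; lia.
  by have := down1 _ Bd1 d1i; lia.
- have := downj _ Bb2 b2j; case: d1i => d1i.
    have := height_down_up2 BcalB hij Bd1 Bb2 d1j d1i b2i b2j.
    by move: up2d1; rewrite d1i d1j b2j; lia.
  have := down1 _ Bd1 d1i; case: b1j => b1j.
    by move: up2b1; rewrite b1i b1j b2j; lia.
  by have := downj _ Bb1 b1j; lia.
Qed.
Lemma descent_lt_rB3 : descent i B -> ~ B (alpha j) ->
  rB j (rB i (rB j B)) <> rB i (rB j B) ->
  layer_lt (rB j (rB i (rB j B))) (rB i (rB j B)).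
Proof.
move=> desc_i Bj hne; have Bi := descent_notin BcalB desc_i.
case: desc_i => b1 Bb1 [b1i _ down1].
have rjBi := notin_alpha_rB hij Bpos Bj Bij.
have rjBpos := calB_pos (calB_rB j BcalB).
apply: lt_of_not_ascent hne _; first by do 2 apply: calB_rB.
move=> [_ /(rBE rjBpos rjBi) [_ /(rBE Bpos Bj) [b2 Bb2 ->] ->] [b2j _ up2]].
have := up2 _ (rB_refl rjBpos rjBi (rB_refl Bpos Bj Bb1)).
rewrite !height_refl !rfaj !rform_refl_alpha_id !rfai in b2j *.
have b2i : rfa i b2 = -1 by lia.
have := down1 _ Bb2 b2i; have := height_down_up2 BcalB hji Bb1 Bb2 b1i.
have := rform_alpha2_mem BcalB hij Bi Bj Bij Bb1.
have := rform_alpha2_mem BcalB hij Bi Bj Bij Bb2.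
lia.
Qed.

End Adjacent.

Lemma braid_lt_rB i j B : calB B -> adj i j ->
  layer_lt (rB i B) B -> layer_lt (rB j B) B ->
  rB i (rB j B) = rB j B \/
  [/\ layer_lt (rB i (rB j B)) (rB j B), layer_lt (rB j (rB i B)) (rB i B),
      layer_lt (rB i (rB j (rB i B))) (rB i (rB j B)) &
      layer_lt (rB i (rB j (rB i B))) (rB j (rB i B))].
Proof.
move=> BcalB hij lti ltj; have hji : adj j i by rewrite adj_sym.
have Bpos := calB_pos BcalB; have Broot := sub_roots Bpos.
have desc_i := lt_descent BcalB lti; have desc_j := lt_descent BcalB ltj.
have Bi := descent_notin BcalB desc_i; have Bj := descent_notin BcalB desc_j.
have rBB k : layer_lt (rB k B) B -> rB k B <> B.
  by move=> ltk e; move: ltk; rewrite e; apply: layer_lt_irr.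
case: (pselect (rB i (rB j B) = rB j B)) => [| fix_ij]; [by left | right].
have Bij : ~ B (alpha i + alpha j).
  by move=> /(rB_refl Bpos Bj); rewrite -refl_alpha_adj // reflK => /(rB_alpha (calB_rB j BcalB)).
have Bji : ~ B (alpha j + alpha i) by rewrite addrC.
have fix_ji : rB j (rB i B) <> rB i B.
  move=> e; apply: fix_ij.
  have := congr1 (wimg adj [:: i]) e; rewrite rB_braid // !rBK // => /(congr1 (wimg adj [:: j])).
  by rewrite !rBK.
split.
- exact: descents_lt_rB2 BcalB hij Bij desc_i desc_j fix_ij.
- exact: descents_lt_rB2 BcalB hji Bji desc_j desc_i fix_ji.
- rewrite rB_braid //; apply: (descent_lt_rB3 BcalB hij Bij desc_i Bj) => e.
  apply: (rBB i lti).
  have := congr1 (wimg adj [:: i]) e; rewrite -rB_braid // !rBK // => /(congr1 (wimg adj [:: j])).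
  by rewrite !rBK.
- apply: (descent_lt_rB3 BcalB hji Bji desc_j Bi) => e.
  apply: (rBB j ltj).
  have := congr1 (wimg adj [:: j]) e; rewrite rB_braid // !rBK // => /(congr1 (wimg adj [:: i])).
  by rewrite !rBK.
Qed.

Lemma commuting_lt_rB i j B : calB B -> admissible adj calB -> i != j -> ~~ adj i j ->
  layer_lt (rB i B) B -> layer_lt (rB j B) B -> rB i B <> rB j B ->
  layer_lt (rB i (rB j B)) (rB j B).
Proof.
move=> BcalB adm nij aij lti ltj hne.
have desc_i := lt_descent BcalB lti; have Bi := descent_notin BcalB desc_i.
have Bj := descent_notin BcalB (lt_descent BcalB ltj).
case: desc_i => b1 Bb1 [b1i _ down1].
have Bpos := calB_pos BcalB; have [rb1 _] := Bpos _ Bb1.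
have nji : j != i by rewrite eq_sym.
have aji : ~~ adj j i by rewrite adj_sym.
have rfai b : rfa i (r j b) = rfa i b by rewrite rform_refl_alpha_nadj.
apply: lt_of_not_ascent; first exact: calB_rB.
  move=> e; move: lti; suff -> : rB i B = B by apply: layer_lt_irr.
  by have := congr1 (wimg adj [:: j]) e; rewrite rB_comm // !rBK.
move=> [_ /(rBE Bpos Bj) [b2 Bb2 ->] [b2i _ up2]]; rewrite rfai in b2i.
have [rb2 _] := Bpos _ Bb2.
have b12 : b1 <> b2 by move=> e; move: b1i; rewrite e b2i; lia.
have [b1j b2j] : rfa j b1 = 1 /\ rfa j b2 = -1.
  have := up2 _ (rB_refl Bpos Bj Bb1); rewrite rfai !height_refl.
  have := down1 _ Bb2 b2i.
  by have := rform_alpha_mem BcalB Bj Bb1; have := rform_alpha_mem BcalB Bj Bb2; lia.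
have b1E : b1 = r i (r j b2).
  apply: rform_root_ge2 => //; first exact/root_refl/root_refl.
  by rewrite !rform_reflr (calB_orth BcalB Bb1 Bb2 b12) rfai b1i b1j b2i b2j.
(* r_i b1 and r_i b1 - alpha_j + alpha_i = r_i b2 both lie in r_i B, so
   admissibility gives r_j (r_i B) = r_i (r_i B) = B. *)
have rBiB : rB i B (r i b1 - alpha j + alpha i).
  have -> : r i b1 - alpha j + alpha i = r i b2.
    by rewrite b1E reflK !reflE b2i b2j; apply/rowP => k; rewrite !mxE; ring.
  exact: rB_refl.
have := adm _ (calB_rB i BcalB) j i nji aji _ (root_refl i rb1) (rB_refl Bpos Bi Bb1) rBiB.
by rewrite rBK // => /(congr1 (wimg adj [:: j])); rewrite rBK.
Qed.

End Orbit.

End FiniteRootSystem.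
End RootLattice.

Theorem proposition3p1 (n : nat) (adj : rel 'I_n)
  (calB : set (set (vec n))) :
  diagram adj -> spherical adj ->
  W_orbit adj calB -> admissible adj calB ->
  exists lt : set (vec n) -> set (vec n) -> Prop,
    strict_porder_on calB lt /\
    forall B, calB B -> forall i j : 'I_n,
      let ri := wimg adj [:: i] B in
      let rj := wimg adj [:: j] B in
      let rirj := wimg adj [:: i; j] B in
      let rjri := wimg adj [:: j; i] B in
      let rirjri := wimg adj [:: i; j; i] B in
      (* (i) *)
      ((ri = B \/ lt B ri \/ lt ri B) /\
       ((exists2 b, B b & (rform adj (alpha i) b = 1 \/ rform adj (alpha i) b = -1))
          -> ri <> B)) /\
      (* (ii) *)
      (adj i j -> (forall b, B b -> rform adj (alpha i) b = 0) ->
         (lt rj B -> lt rirj rj) /\ (lt B rj -> lt rj rirj)) /\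
      (* (iii) *)
      (i != j -> ~~ adj i j -> lt ri B -> lt rj B -> ri <> rj ->
         lt rirj rj /\ lt rirj ri) /\
      (* (iv) *)
      (adj i j -> lt ri B -> lt rj B ->
         rirj = rj \/
         [/\ lt rirj rj, lt rjri ri, lt rirjri rirj & lt rirjri rjri]).
Proof.
move=> adjD adjS calBW adm; exists (layer_lt (n:=n)); split.
  by split=> [B _ | A B C _ _ _]; [apply: layer_lt_irr | apply: layer_lt_trans].
move=> B BcalB i j /=; have Broot := sub_roots (calB_pos calBW BcalB).
rewrite !wimg2 // wimg3 //.
split; [split | split; [| split]].
- exact: (rB_comparable adjD adjS calBW i BcalB).
- by case=> b Bb; apply: (rB_neq adjD adjS calBW BcalB Bb).
- move=> hij Bi0; have Bi0' b : B b -> rform adj b (alpha i) = 0 by move/Bi0; rewrite rformC.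
  by split; [apply: (orth_lt_rB adjD adjS calBW BcalB hij Bi0') |
             apply: (orth_gt_rB adjD adjS calBW BcalB hij Bi0')].
- move=> nij aij lti ltj hne; have nji : j != i by rewrite eq_sym.
  have aji : ~~ adj j i by rewrite adj_sym.
  split; first exact: (commuting_lt_rB adjD adjS calBW BcalB adm nij aij lti ltj hne).
  rewrite (rB_comm adjD adjS nij aij Broot).
  by apply: (commuting_lt_rB adjD adjS calBW BcalB adm nji aji ltj lti) => /esym.
- exact: (braid_lt_rB adjD adjS calBW BcalB).
Qed.
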